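(* Let $\alpha(k,b)=b/(k\ln b)\ge2$ and $b$ sufficiently large. In a uniformly random proper $k$-coloring of the complete tree $T$ with branching factor $b$, the probability that any given vertex of $T$ is not frozen is at most $b^{-1}$.
   Context: A vertex $v$ is frozen in coloring $\sigma$ if every proper coloring agreeing with $\sigma$ on the leaves of the subtree rooted at $v$ gives $v$ the color $\sigma(v)$; leaves are always frozen. *)

From mathcomp Require Import all_boot.
Set Implicit Arguments. Unset Strict Implicit. Unset Printing Implicit Defensive.

(* Vertices of the complete b-ary tree of depth n: words over 'I_b of length d <= n.
   The root is the empty word; the children of w are the words rcons w i. *)
Definition vtx (b n : nat) : finType := {d : 'I_n.+1 & d.-tuple 'I_b}.

Definition word b n (v : vtx b n) : seq 'I_b := val (tagged v).

Definition child b n (w u : vtx b n) : bool :=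
  (size (word u) == (size (word w)).+1) && prefix (word w) (word u).

Definition desc b n (v u : vtx b n) : bool := prefix (word v) (word u).

Definition leaf b n (u : vtx b n) : bool := size (word u) == n.

Definition coloring b n k := {ffun vtx b n -> 'I_k}.

Definition proper_col b n k (c : coloring b n k) : bool :=
  [forall w, forall u, child w u ==> (c w != c u)].

Definition proper_on b n k (v : vtx b n) (c : coloring b n k) : bool :=
  [forall w, forall u, (desc v w && child w u) ==> (c w != c u)].

Definition frozen b n k (sigma : coloring b n k) (v : vtx b n) : bool :=
  [forall tau : coloring b n k,
     (proper_on v tau && [forall u, (desc v u && leaf u) ==> (tau u == sigma u)])
     ==> (tau v == sigma v)].

From mathcomp Require Import all_boot fingroup perm zify.
Set Implicit Arguments. Unset Strict Implicit. Unset Printing Implicit Defensive.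

(* Fix a vertex u and the colouring r outside its subtree T_u.  Swapping two
   colours inside T_u shows that every root colour a of u admits equally many
   proper extensions of r.  We show by induction on the height of u that at most
   a 1/b fraction of the extensions with root colour a leave u unfrozen.  If u is
   not frozen, some colour c <> a is not carried by any frozen child of u
   (otherwise every recolouring of u would be blocked).  Conditioning on the
   colouring outside the subtree of one child at a time, the child's colour is
   uniform over the k - 1 colours different from a, and by induction the child
   is frozen except with probability 1/b; so each child independently avoids
   being "frozen with colour c" with probability at most ((k-2)b + 1)/((k-1)b).
   Summing over c, u is unfrozen with probability at most
   (k-1) (1 - (b-1)/((k-1)b))^b <= (k-1) exp(-(b-1)/(k-1)), which is below 1/b
   once b >= 2k ln b and b >= 9. *)

Section Prefix.
Variable T : eqType.

Lemma prefix_size_inj (s1 s2 t : seq T) :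
  prefix s1 t -> prefix s2 t -> size s1 = size s2 -> s1 = s2.
Proof.
move=> /prefixP [r1 ->] /prefixP [r2 E] Hs.
by have := congr1 (take (size s1)) E; rewrite !take_size_cat.
Qed.

Lemma prefix_of_common_prefix (s1 s2 t : seq T) :
  prefix s1 t -> prefix s2 t -> size s1 <= size s2 -> prefix s1 s2.
Proof. by rewrite !prefixE => /eqP E1 /eqP E2 Hs; rewrite -E2 take_takel // E1. Qed.

End Prefix.

Section Tree.
Variables b n : nat.
Local Notation T := (vtx b n).

Lemma size_word_le (v : T) : size (word v) <= n.
Proof. by case: v => d t; rewrite /word /= size_tuple -ltnS ltn_ord. Qed.

Lemma word_inj : injective (@word b n).
Proof.
case=> d t [d' t']; rewrite /word /= => Ht.
have Ed : d = d' by apply: val_inj; rewrite /= -(size_tuple t) -(size_tuple t') Ht.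
by subst d'; rewrite (val_inj Ht).
Qed.

Lemma desc_refl (v : T) : desc v v.
Proof. exact: prefix_refl. Qed.

Lemma desc_trans (u v w : T) : desc u v -> desc v w -> desc u w.
Proof. exact: prefix_trans. Qed.

Lemma child_desc (w x : T) : child w x -> desc w x.
Proof. by case/andP. Qed.

Lemma child_into_subtree (u w x : T) : child w x -> desc u x -> ~~ desc u w -> x = u.
Proof.
case/andP=> /eqP Hsz Hwx Hux Huw; apply: word_inj.
have [Hlt|Hge] := ltnP (size (word u)) (size (word x)).
  by move: Huw; rewrite /desc (prefix_of_common_prefix Hux Hwx) // -ltnS -Hsz.
by apply: (prefix_size_inj (prefix_refl _) Hux); apply/eqP; rewrite eqn_leq Hge size_prefix.
Qed.

Lemma child_parent_uniq (v w x : T) : child v x -> child w x -> v = w.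
Proof.
case/andP=> /eqP H1 P1 /andP [/eqP H2 P2]; apply: word_inj.
by apply: prefix_size_inj P1 P2 _; apply/eqP; rewrite -eqSS -H1 -H2.
Qed.

Section Children.
Variables (v : T) (Hv : size (word v) < n).

Fact size_rcons_word_lt i : size (rcons (word v) i) < n.+1.
Proof. by rewrite size_rcons. Qed.

Definition childv (i : 'I_b) : T :=
  @existT _ _ (Ordinal (size_rcons_word_lt i)) (@Tuple _ _ (rcons (word v) i) (eqxx _)).

Lemma word_childv i : word (childv i) = rcons (word v) i.
Proof. by []. Qed.

Lemma child_childv i : child v (childv i).
Proof. by rewrite /child word_childv size_rcons eqxx prefix_rcons. Qed.

Lemma childv_inj : injective childv.
Proof. by move=> i j /(congr1 (@word b n)); rewrite !word_childv => /rcons_inj [->]. Qed.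

Lemma desc_childv i x : desc (childv i) x -> desc v x.
Proof. exact/desc_trans/child_desc/child_childv. Qed.

Lemma childv_not_desc i : ~~ desc (childv i) v.
Proof. by apply/negP => /size_prefix; rewrite word_childv size_rcons ltnn. Qed.

Lemma desc_childv_disj i j x : desc (childv i) x -> desc (childv j) x -> i = j.
Proof.
move=> Hi Hj; apply/childv_inj/word_inj.
by apply: prefix_size_inj Hi Hj _; rewrite !word_childv !size_rcons.
Qed.

End Children.

End Tree.

Section Frozen.
Variables b n k : nat.
Local Notation T := (vtx b n).
Local Notation col := (coloring b n k).

Lemma proper_onP (u : T) (s : col) :
  reflect (forall w x, desc u w -> child w x -> s w != s x) (proper_on u s).
Proof.
apply: (iffP forallP) => [H w x Hw Hc | H w].
  by have /forallP /(_ x) := H w; rewrite Hw Hc.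
by apply/forallP => x; apply/implyP => /andP [Hw Hc]; apply: H.
Qed.

Lemma proper_on_desc (u v : T) (s : col) : desc u v -> proper_on u s -> proper_on v s.
Proof.
move=> Huv /proper_onP H; apply/proper_onP => w x Hw; apply: H.
exact: desc_trans Hw.
Qed.

Lemma frozen_eq_on_subtree (u : T) (s s' : col) :
  (forall x, desc u x -> s x = s' x) -> frozen s u = frozen s' u.
Proof.
move=> E; apply: eq_forallb => tau.
rewrite E ?desc_refl //; congr (_ && _ ==> _).
by apply: eq_forallb => x; case Hx: (desc u x) => //=; rewrite E.
Qed.

Lemma frozen_leaf (u : T) (s : col) : leaf u -> frozen s u.
Proof.
move=> Hl; apply/forallP => tau; apply/implyP => /andP [_ /forallP /(_ u)].
by rewrite desc_refl Hl.
Qed.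

Lemma frozen_small_palette (u : T) (s : col) : k <= 1 -> frozen s u.
Proof.
move=> Hk; apply/forallP => tau; apply/implyP => _.
by case: k Hk s tau => [|[|//]] _ s tau; [case: (s u) | rewrite !ord1].
Qed.

Definition frozen_with (s : col) (u : T) (c : 'I_k) := frozen s u && (s u == c).

(* A recolouring of T_v that changes the colour of v must, for a child frozen
   with the new colour, give that child the colour of v. *)
Lemma frozen_of_children (v : T) (Hv : size (word v) < n) (s : col) :
  (forall c, c != s v -> exists i, frozen_with s (childv Hv i) c) -> frozen s v.
Proof.
move=> Hc; apply/forallP => tau; apply/implyP => /andP [Hp Hl].
apply: contraT => Htau; have [i /andP [Hf /eqP Hi]] := Hc _ Htau.
have Hp_i := proper_on_desc (child_desc (child_childv Hv i)) Hp.
have Hl_i : [forall u, desc (childv Hv i) u && leaf u ==> (tau u == s u)].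
  apply/forallP => u; apply/implyP => /andP [Hu Hlu].
  by have /forallP /(_ u) := Hl; rewrite (desc_childv Hu) Hlu.
have /eqP Ht := implyP (forallP Hf tau) (introT andP (conj Hp_i Hl_i)).
move/proper_onP: Hp => /(_ v _ (desc_refl _) (child_childv Hv i)).
by rewrite Ht Hi eqxx.
Qed.

End Frozen.

Section Counting.
Variables (X K : finType).

Lemma card_fibers (f : X -> K) (S : {set X}) :
  #|S| = \sum_(g : K) #|[set x in S | f x == g]|.
Proof.
rewrite -sum1_card (partition_big f predT) //=.
by apply: eq_bigr => g _; rewrite -sum1_card; apply: eq_bigl => x; rewrite inE.
Qed.

Lemma leq_mul_card_fibers (f : X -> K) (S S' : {set X}) m d :
  (forall g, m * #|[set x in S' | f x == g]| <= d * #|[set x in S | f x == g]|) ->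
  m * #|S'| <= d * #|S|.
Proof.
move=> H; rewrite (card_fibers f S) (card_fibers f S') !big_distrr /=.
by apply: leq_sum => g _; apply: H.
Qed.

Lemma leq_card_bigcup (I : finType) (P : pred I) (F : I -> {set X}) :
  #|\bigcup_(i | P i) F i| <= \sum_(i | P i) #|F i|.
Proof.
elim/big_rec2: _ => [|i m U _ IH]; first by rewrite cards0.
by rewrite (leq_trans (leq_card_setU _ _)) // leq_add2l.
Qed.

End Counting.

Section Extensions.
Variables b n k : nat.
Local Notation T := (vtx b n).
Local Notation col := (coloring b n k).

Definition agree_off (u : T) (s r : col) := [forall x, ~~ desc u x ==> (s x == r x)].

Lemma agree_offP (u : T) (s r : col) :
  reflect (forall x, ~~ desc u x -> s x = r x) (agree_off u s r).
Proof.
apply: (iffP forallP) => [H x Hx | H x]; first by have /implyP /(_ Hx) /eqP := H x.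
by apply/implyP => Hx; rewrite H.
Qed.

Definition off_subtree (u : T) (s : col) : {ffun T -> option 'I_k} :=
  [ffun x => if desc u x then None else Some (s x)].

Lemma off_subtree_eq (u : T) (s r : col) :
  (off_subtree u s == off_subtree u r) = agree_off u s r.
Proof.
apply/eqP/agree_offP => [E x Hx | E].
  by have := congr1 (fun f : {ffun T -> option 'I_k} => f x) E; rewrite !ffunE (negbTE Hx) => [[]].
by apply/ffunP => x; rewrite !ffunE; case: ifP => // /negbT /E ->.
Qed.

Definition extensions (u : T) (r : col) (a : 'I_k) : {set col} :=
  [set s | [&& proper_on u s, s u == a & agree_off u s r]].

Definition unfrozen_extensions (u : T) (r : col) (a : 'I_k) : {set col} :=
  [set s in extensions u r a | ~~ frozen s u].

Definition recolor (u : T) (a a' : 'I_k) (s : col) : col :=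
  [ffun x => if desc u x then tperm a a' (s x) else s x].

Lemma recolorK (u : T) (a a' : 'I_k) : involutive (recolor u a a').
Proof.
by move=> s; apply/ffunP => x; rewrite !ffunE; case: (desc u x); rewrite ?tpermK.
Qed.

Lemma recolor_extensions (u : T) (r : col) (a a' : 'I_k) (s : col) :
  s \in extensions u r a -> recolor u a a' s \in extensions u r a'.
Proof.
rewrite !inE => /and3P [Hp /eqP Hu /agree_offP Ha]; apply/and3P; split.
- apply/proper_onP => w x Hw Hc; rewrite !ffunE Hw (desc_trans Hw (child_desc Hc)).
  by rewrite (inj_eq perm_inj); move/proper_onP: Hp; apply.
- by rewrite ffunE desc_refl Hu tpermL.
- by apply/agree_offP => x Hx; rewrite ffunE (negbTE Hx) Ha.
Qed.

Lemma card_extensions_root (u : T) (r : col) (a a' : 'I_k) :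
  #|extensions u r a| = #|extensions u r a'|.
Proof.
suff L c c' : #|extensions u r c| <= #|extensions u r c'|.
  by apply/eqP; rewrite eqn_leq !L.
rewrite -(card_imset _ (can_inj (recolorK u c c'))); apply: subset_leq_card.
by apply/subsetP => _ /imsetP [s Hs ->]; apply: recolor_extensions.
Qed.

Lemma card_extensions_root_neq (u : T) (r : col) (a c : 'I_k) :
  #|[set s | [&& proper_on u s, s u != a & agree_off u s r]]| = k.-1 * #|extensions u r c|.
Proof.
rewrite (card_fibers (fun s : col => s u)) (bigD1 a) //=.
have -> : #|[set s in [set s | [&& proper_on u s, s u != a & agree_off u s r]] | s u == a]| = 0.
  by apply/eqP; rewrite cards_eq0; apply/eqP/setP => s; rewrite !inE; case: (s u == a); rewrite andbF.
rewrite add0n (eq_bigr (fun _ => #|extensions u r c|)) => [|a' Ha'].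
  rewrite sum_nat_const; congr (_ * _).
  by rewrite -[in RHS](card_ord k) -(cardC1 a); apply: eq_card => x; rewrite !inE.
rewrite (card_extensions_root u r c a'); apply: eq_card => s; rewrite !inE.
by case: (eqVneq (s u) a') => [->|_]; rewrite ?Ha' ?andbT //= !andbF.
Qed.

End Extensions.

Lemma ratio_step k b N B x : 1 < k -> B <= N -> b * B <= N ->
  x <= k.-1 * N - (N - B) -> k.-1 * b * x <= (k.-2 * b + 1) * (k.-1 * N).
Proof.
case: k => [|[|k]] //= _ HBN HbB Hx.
have {}Hx : x <= k * N + B by lia.
apply: (leq_trans (leq_mul (leqnn _) Hx)).
have : k.+1 * (b * B) <= k.+1 * N by rewrite leq_mul2l HbB orbT.
nia.
Qed.

(* [(k-1) (((k-2)b + 1) / ((k-1)b))^b <= 1/b]: each of the [b] children keeps at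
   most that fraction of the colourings, and the unforced colour has [k - 1]
   choices. *)
Definition ratio_condition b k := b * k.-1 * (k.-2 * b + 1) ^ b <= (k.-1 * b) ^ b.

Section ChildStep.
Variables b n k : nat.
Local Notation T := (vtx b n).
Local Notation col := (coloring b n k).
Variables (v : T) (Hv : size (word v) < n) (r : col) (a : 'I_k).
Local Notation ch := (childv Hv).

Lemma extensions_fiber (i : 'I_b) (s0 s : col) :
  s0 \in extensions v r a -> agree_off (ch i) s s0 ->
  (s \in extensions v r a) = proper_on (ch i) s && (s (ch i) != a).
Proof.
rewrite !inE => /and3P [Hp0 /eqP Hv0 /agree_offP Har0] /agree_offP Ag.
have Hsv : s v = a by rewrite Ag ?childv_not_desc.
have -> : agree_off v s r.
  apply/agree_offP => x Hx; rewrite Ag ?Har0 //.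
  by apply: contra Hx; apply: desc_childv.
rewrite Hsv eqxx !andbT; apply/idP/andP => [Hp | [Hpu Hua]].
  split; first exact: proper_on_desc (child_desc (child_childv Hv i)) Hp.
  by rewrite -Hsv eq_sym; move/proper_onP: Hp; apply; [exact: desc_refl | exact: child_childv].
apply/proper_onP => w x Hw Hc.
case Hwu: (desc (ch i) w); first by move/proper_onP: Hpu; apply.
case Hxu: (desc (ch i) x).
  have Ex := child_into_subtree Hc Hxu (negbT Hwu); subst x.
  by rewrite (child_parent_uniq Hc (child_childv Hv i)) Hsv eq_sym.
by rewrite !Ag ?Hwu ?Hxu //; move/proper_onP: Hp0; apply.
Qed.

Lemma frozen_with_sibling (i j : 'I_b) (s0 s : col) c :
  agree_off (ch i) s s0 -> j != i -> frozen_with s (ch j) c = frozen_with s0 (ch j) c.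
Proof.
move=> /agree_offP Ag Hji.
have D x : desc (ch j) x -> ~~ desc (ch i) x.
  by move=> Hx; apply: contra Hji => Hx'; rewrite (desc_childv_disj Hx Hx').
rewrite /frozen_with Ag ?D ?desc_refl //.
by rewrite (frozen_eq_on_subtree (s' := s0)) // => x Hx; rewrite Ag ?D.
Qed.

Fact avoiding_key : unit. Proof. by []. Qed.
Definition avoiding (c : 'I_k) (j : nat) : {set col} := locked_with avoiding_key
  [set s in extensions v r a | [forall i : 'I_b, (i < j) ==> ~~ frozen_with s (ch i) c]].

Lemma in_avoiding c j s : (s \in avoiding c j) =
  (s \in extensions v r a) && [forall i : 'I_b, (i < j) ==> ~~ frozen_with s (ch i) c].
Proof. by rewrite [avoiding _ _]unlock in_set. Qed.

Lemma avoiding0 c : avoiding c 0 = extensions v r a.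
Proof. by apply/setP => s; rewrite in_avoiding; apply/andb_idr => _; apply/forallP. Qed.

Lemma avoidingS c (i : 'I_b) s :
  (s \in avoiding c i.+1) = (s \in avoiding c i) && ~~ frozen_with s (ch i) c.
Proof.
rewrite !in_avoiding -andbA; case: (s \in extensions v r a) => //=.
apply/forallP/andP => [Hf | [/forallP Hf Hi] j].
  split; last by have /implyP := Hf i; apply.
  by apply/forallP => j; apply/implyP => Hj; have /implyP := Hf j; apply; apply: ltnW.
apply/implyP; rewrite ltnS leq_eqVlt => /orP [/eqP /val_inj -> //|].
by have /implyP := Hf j; apply.
Qed.

Lemma avoiding_fiberE c (i : 'I_b) s0 : s0 \in avoiding c i ->
  [set s in avoiding c i | agree_off (ch i) s s0] =
  [set s | [&& proper_on (ch i) s, s (ch i) != a & agree_off (ch i) s s0]].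
Proof.
move=> Hs0; apply/setP => s; rewrite in_set [in RHS]in_set in_avoiding.
case Ag: (agree_off (ch i) s s0); rewrite ?andbF //.
move: Hs0; rewrite in_avoiding => /andP [Hext /forallP Hf].
rewrite (extensions_fiber Hext Ag) !andbT; apply/andb_idr => _.
apply/forallP => j; apply/implyP => Hj.
have Hji : j != i by apply: contraTneq Hj => ->; rewrite ltnn.
by rewrite (frozen_with_sibling _ Ag Hji); apply: (implyP (Hf j)).
Qed.

Lemma avoidingS_fiber c (i : 'I_b) s0 :
  [set s in avoiding c i.+1 | agree_off (ch i) s s0] \subset
  [set s in avoiding c i | agree_off (ch i) s s0]
    :\: (extensions (ch i) s0 c :\: unfrozen_extensions (ch i) s0 c).
Proof.
apply/subsetP => s; rewrite in_set avoidingS -andbA => /and3P [Hs Hnf Ag].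
rewrite in_setD in_set Hs Ag !andbT in_setD in_set negb_and negbK.
case E: (s \in extensions (ch i) s0 c) => //=; rewrite orbF.
by move: E Hnf; rewrite inE /frozen_with => /and3P [_ -> _]; rewrite andbT.
Qed.

Hypothesis k_gt1 : 1 < k.
Hypothesis children_bound : forall (i : 'I_b) (rho : col) (a' : 'I_k),
  b * #|unfrozen_extensions (ch i) rho a'| <= #|extensions (ch i) rho a'|.

Lemma card_avoidingS c (i : 'I_b) : c != a ->
  k.-1 * b * #|avoiding c i.+1| <= (k.-2 * b + 1) * #|avoiding c i|.
Proof.
move=> Hca; apply: (leq_mul_card_fibers (f := off_subtree (ch i))) => g.
have [F0|[s0]] := set_0Vmem [set s in avoiding c i | off_subtree (ch i) s == g].
  rewrite F0 cards0 muln0 leqn0 muln_eq0 cards_eq0 -subset0 -F0; apply/orP; right.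
  by apply/subsetP => s; rewrite !in_set avoidingS -andbA => /and3P [-> _ ->].
rewrite in_set => /andP [Hs0 /eqP Hg].
have fiberE S : [set s in S | off_subtree (ch i) s == g] = [set s in S | agree_off (ch i) s s0].
  by apply: eq_finset => s; rewrite -Hg off_subtree_eq.
rewrite !fiberE (avoiding_fiberE Hs0) (card_extensions_root_neq _ _ _ c).
set N := #|extensions (ch i) s0 c|; set B := #|unfrozen_extensions (ch i) s0 c|.
have sBN : unfrozen_extensions (ch i) s0 c \subset extensions (ch i) s0 c.
  by apply/subsetP => s; rewrite in_set => /andP [].
have sDF : extensions (ch i) s0 c :\: unfrozen_extensions (ch i) s0 c \subset
           [set s | [&& proper_on (ch i) s, s (ch i) != a & agree_off (ch i) s s0]].
  by apply/subsetP => s; rewrite !inE => /andP [_ /and3P [-> /eqP -> ->]]; rewrite Hca.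
have := subset_leq_card (avoidingS_fiber c i s0); rewrite (avoiding_fiberE Hs0).
rewrite cardsD (setIidPr sDF) cardsD (setIidPr sBN) (card_extensions_root_neq _ _ _ c) => Hx.
by apply: ratio_step Hx => //; apply: subset_leq_card.
Qed.

Lemma card_avoiding c j : c != a -> j <= b ->
  (k.-1 * b) ^ j * #|avoiding c j| <= (k.-2 * b + 1) ^ j * #|extensions v r a|.
Proof.
move=> Hca; elim: j => [|j IH] Hj; first by rewrite !expn0 !mul1n avoiding0.
have := card_avoidingS (Ordinal Hj) Hca; rewrite /= !expnS => Hstep.
apply: (@leq_trans ((k.-1 * b) ^ j * ((k.-2 * b + 1) * #|avoiding c j|))).
  by rewrite [_ * (_ ^ j)]mulnC -mulnA leq_mul.
by rewrite mulnCA -mulnA leq_mul // IH // ltnW.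
Qed.

Lemma unfrozen_sub_bigcup_avoiding :
  unfrozen_extensions v r a \subset \bigcup_(c | c != a) avoiding c b.
Proof.
apply/subsetP => s; rewrite in_set => /andP [Hs Hnf].
have Hsv : s v = a by move: Hs; rewrite inE => /and3P [_ /eqP].
have : ~~ [forall c, (c != s v) ==> [exists i, frozen_with s (ch i) c]].
  apply: contra Hnf => /forallP Hf; apply: (frozen_of_children (Hv := Hv)) => c Hc.
  exact/existsP/(implyP (Hf c)).
rewrite negb_forall => /existsP [c]; rewrite negb_imply negb_exists => /andP [Hc /forallP Hi].
apply/bigcupP; exists c; first by rewrite -Hsv.
by rewrite in_avoiding Hs; apply/forallP => i; rewrite Hi implybT.
Qed.

Lemma unfrozen_extensions_bound_step :
  ratio_condition b k -> b * #|unfrozen_extensions v r a| <= #|extensions v r a|.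
Proof.
rewrite /ratio_condition; set m := k.-1 * b; set d := k.-2 * b + 1 => Hratio.
have [b0|b_gt0] := posnP b.
  by have /eqP -> : b * #|unfrozen_extensions v r a| == 0 by rewrite muln_eq0 (introT eqP b0).
have m_gt0 : 0 < m ^ b by rewrite expn_gt0 muln_gt0 b_gt0 andbT; apply/orP; left; lia.
have Hunion : m ^ b * #|unfrozen_extensions v r a| <= k.-1 * (d ^ b * #|extensions v r a|).
  have := leq_trans (subset_leq_card unfrozen_sub_bigcup_avoiding) (leq_card_bigcup _ _).
  move/(leq_mul (leqnn (m ^ b)))/leq_trans; apply; rewrite big_distrr /=.
  apply: (@leq_trans (\sum_(c | c != a) d ^ b * #|extensions v r a|)).
    by apply: leq_sum => c Hc; apply: card_avoiding.
  rewrite sum_nat_const leq_mul2r; apply/orP; right.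
  by have := cardC1 a; rewrite card_ord => <-; apply/eq_leq/eq_card => x; rewrite !inE.
rewrite -(leq_pmul2l m_gt0) mulnCA (leq_trans (leq_mul (leqnn b) Hunion)) // !mulnA.
by rewrite leq_mul2r Hratio orbT.
Qed.

End ChildStep.

Section Colorings.
Variables b n k : nat.
Local Notation T := (vtx b n).
Local Notation col := (coloring b n k).

Lemma unfrozen_extensions_bound (u : T) (r : col) (a : 'I_k) : ratio_condition b k ->
  b * #|unfrozen_extensions u r a| <= #|extensions u r a|.
Proof.
move=> Hratio.
have no_unfrozen (w : T) (rho : col) (c : 'I_k) : (forall s : col, frozen s w) ->
    b * #|unfrozen_extensions w rho c| <= #|extensions w rho c|.
  move=> Hf; rewrite (_ : unfrozen_extensions w rho c = set0) ?cards0 ?muln0 //.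
  by apply/setP => s; rewrite in_set0 in_set Hf andbF.
have [k_le1|k_gt1] := leqP k 1.
  by apply: no_unfrozen => s; apply: frozen_small_palette.
move Hh: (n - size (word u)) => h; elim: h u r a Hh => [|h IH] u r a Hh.
  apply: no_unfrozen => s; apply: frozen_leaf.
  by rewrite /leaf eqn_leq size_word_le /=; lia.
have Hu : size (word u) < n by lia.
apply: (unfrozen_extensions_bound_step (Hv := Hu)) => // i rho a'.
by apply: IH; rewrite word_childv size_rcons; lia.
Qed.

Lemma proper_colP (s : col) :
  reflect (forall w x, child w x -> s w != s x) (proper_col s).
Proof.
apply: (iffP forallP) => [Hf w x | Hf w]; first exact: implyP (forallP (Hf w) x).
by apply/forallP => x; apply/implyP; apply: Hf.
Qed.

Lemma proper_col_agree_off (v : T) (s s0 : col) : proper_col s0 -> agree_off v s s0 ->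
  s v = s0 v -> proper_col s = proper_on v s.
Proof.
move=> /proper_colP P0 /agree_offP Ag Ev.
apply/proper_colP/proper_onP => [Hp w x _ | Hp w x Hc]; first exact: Hp.
case Hw: (desc v w); first exact: Hp Hw Hc.
case Hx: (desc v x); last by rewrite !Ag ?Hw ?Hx //; apply: P0.
by rewrite -(child_into_subtree Hc Hx (negbT Hw)) in Ev *; rewrite Ev Ag ?Hw //; apply: P0.
Qed.

Lemma card_unfrozen_proper (v : T) : ratio_condition b k ->
  b * #|[set s : col | proper_col s && ~~ frozen s v]| <= #|[set s : col | proper_col s]|.
Proof.
move=> Hratio; rewrite -[X in _ <= X]mul1n.
apply: (leq_mul_card_fibers (f := fun s : col => (off_subtree v s, s v))) => -[g a].
have [F0|[s0]] := set_0Vmem [set s in [set s : col | proper_col s] | (off_subtree v s, s v) == (g, a)].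
  rewrite F0 cards0 muln0 leqn0 muln_eq0 cards_eq0 -subset0 -F0; apply/orP; right.
  by apply/subsetP => s; rewrite !inE -andbA => /and3P [-> _ ->].
rewrite !inE xpair_eqE => /and3P [P0 /eqP Hg /eqP Ha].
have fiberE s : proper_col s && ((off_subtree v s, s v) == (g, a)) = (s \in extensions v s0 a).
  rewrite xpair_eqE -Hg off_subtree_eq -Ha inE.
  case Ag: (agree_off v s s0); case Ev: (s v == s0 v); rewrite ?andbF //=.
  by rewrite (proper_col_agree_off P0 Ag (eqP Ev)) !andbT.
have -> : [set s in [set s : col | proper_col s] | (off_subtree v s, s v) == (g, a)] =
          extensions v s0 a by apply/setP => s; rewrite -fiberE !inE.
have -> : [set s in [set s : col | proper_col s && ~~ frozen s v] | (off_subtree v s, s v) == (g, a)] =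
          unfrozen_extensions v s0 a.
  by apply/setP => s; rewrite [RHS]in_set -fiberE !inE andbAC.
by rewrite mul1n unfrozen_extensions_bound.
Qed.

End Colorings.

From Stdlib Require Import Reals Lra.
Local Open Scope R_scope.

Lemma exp_le_exp x y : x <= y -> exp x <= exp y.
Proof. by case=> [/exp_increasing/Rlt_le | ->]; [| apply: Rle_refl]. Qed.

Lemma exp_INR_mul (m : nat) x : exp (INR m * x) = exp x ^ m.
Proof.
elim: m => [|m IH]; first by rewrite Rmult_0_l exp_0.
by rewrite S_INR Rmult_plus_distr_r Rmult_1_l exp_plus IH /= Rmult_comm.
Qed.

Lemma pow_le_exp (y : R) (m : nat) : y <= 1 -> (1 - y) ^ m <= exp (- (INR m * y)).
Proof.
move=> Hy; rewrite Ropp_mult_distr_r exp_INR_mul; apply: pow_incr; split; first lra.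
by have := exp_ineq1_le (- y); lra.
Qed.

Lemma ln_ge_2 x : 9 <= x -> 2 <= ln x.
Proof.
move=> Hx; apply: Rnot_lt_le => Hlt.
have Hexp2 : exp 2 <= 9.
  rewrite (_ : 2 = 1 + 1) ?exp_plus; last lra.
  by have := exp_le_3; have := exp_pos 1; nra.
by have := exp_increasing _ _ Hlt; rewrite exp_ln; lra.
Qed.

(* With [ln B >= 2], the hypothesis gives [(B - 1) / (L + 1) >= 2 ln B - 1] and
   [3 (L + 1) <= B], so the left side is at most [e (L + 1) / B]. *)
Lemma exp_decay_bound (B L : R) : 9 <= B -> 0 <= L -> 2 * (L + 2) * ln B <= B ->
  B * (L + 1) * exp (- ((B - 1) / (L + 1))) <= 1.
Proof.
move=> HB HL Hh; have lnB := ln_ge_2 HB.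
have Hdiv : 2 * ln B - 1 <= (B - 1) / (L + 1).
  apply: (Rmult_le_reg_r (L + 1)); first lra.
  rewrite /Rdiv Rmult_assoc Rinv_l; nra.
have Hexp : exp (- ((B - 1) / (L + 1))) * (B * B) <= exp 1.
  have Hle : - ((B - 1) / (L + 1)) <= 1 + - (ln B + ln B) by lra.
  have := exp_le_exp Hle.
  rewrite exp_plus (exp_Ropp (ln B + ln B)) exp_plus exp_ln; last lra.
  move=> H; apply: (Rmult_le_reg_r (/ (B * B))); first by apply: Rinv_0_lt_compat; nra.
  by rewrite Rmult_assoc Rinv_r; nra.
have HLB : 3 * (L + 1) <= B by nra.
have := Rmult_le_compat_l (L + 1) _ _ ltac:(lra) (Rle_trans _ _ _ Hexp exp_le_3).
by move=> H; apply: (Rmult_le_reg_r B); lra.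
Qed.

Lemma ratio_condition_real (B L : R) (b : nat) :
  B = INR b -> 9 <= B -> 0 <= L -> 2 * (L + 2) * ln B <= B ->
  B * (L + 1) * (L * B + 1) ^ b <= ((L + 1) * B) ^ b.
Proof.
move=> EB HB HL Hh; set M := (L + 1) * B; set y := (B - 1) / M.
have M_gt0 : 0 < M by rewrite /M; nra.
have -> : L * B + 1 = M * (1 - y) by rewrite /y /M; field; lra.
have Hy : INR b * y = (B - 1) / (L + 1) by rewrite -EB /y /M; field; lra.
have y_le1 : y <= 1.
  apply: (Rmult_le_reg_r M) => //; rewrite /y /Rdiv Rmult_assoc Rinv_l; [rewrite /M; nra | lra].
have Hpow : (1 - y) ^ b <= exp (- ((B - 1) / (L + 1))) by rewrite -Hy; apply: pow_le_exp.
have key : B * (L + 1) * (1 - y) ^ b <= 1.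
  apply: Rle_trans (exp_decay_bound HB HL Hh); apply: Rmult_le_compat_l => //; nra.
have := Rmult_le_compat_l (M ^ b) _ _ (Rlt_le _ _ (pow_lt _ b M_gt0)) key.
by rewrite Rpow_mult_distr; lra.
Qed.

Local Close Scope R_scope.

Lemma INR_expn m e : INR (expn m e) = (INR m ^ e)%R.
Proof. by elim: e => [|e IH] //; rewrite expnS mult_INR IH. Qed.

Lemma ratio_condition_of_density b k : 9 <= b -> 0 < k ->
  (2 <= INR b / (INR k * ln (INR b)))%R -> ratio_condition b k.
Proof.
case: k => [|[|L]] // Hb _ Hh; first by rewrite /ratio_condition muln0 mul0n.
have HB : (9 <= INR b)%R by have := le_INR 9 b (elimT leP Hb); rewrite /=; lra.
have lnB := ln_ge_2 HB.
have EL : INR L.+2 = (INR L + 2)%R by rewrite !S_INR; lra.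
have L_ge0 := pos_INR L.
have Hdensity : (2 * (INR L + 2) * ln (INR b) <= INR b)%R.
  have Hpos : (0 < (INR L + 2) * ln (INR b))%R by nra.
  move: Hh; rewrite EL => /(Rmult_le_compat_r _ _ _ (Rlt_le _ _ Hpos)).
  by rewrite /Rdiv Rmult_assoc Rinv_l; lra.
apply/leP/INR_le; rewrite /ratio_condition /= !(mult_INR, INR_expn, plus_INR) S_INR.
exact: (ratio_condition_real (L := INR L) erefl).
Qed.

(* For [y = 0] the bound [b * x <= y] forces [x = 0], and [0 / 0 = 0] since [/ 0 = 0]. *)
Lemma INR_div_le_inv (x y b : nat) : 0 < b -> b * x <= y -> (INR x / INR y <= / INR b)%R.
Proof.
move=> b_gt0 Hxy.
have Hb : (0 < INR b)%R by apply/lt_0_INR/ltP.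
have [y0|y_gt0] := posnP y.
  have -> : x = 0 by move: Hxy; rewrite y0; nia.
  by rewrite /= /Rdiv Rmult_0_l; apply/Rlt_le/Rinv_0_lt_compat.
have Hy : (0 < INR y)%R by apply/lt_0_INR/ltP.
have : (INR b * INR x <= INR y)%R by rewrite -mult_INR; apply/le_INR/leP.
move=> H; apply: (Rmult_le_reg_l (INR b)) => //; apply: (Rmult_le_reg_r (INR y)) => //.
rewrite Rinv_r ?Rmult_1_l; last lra.
by rewrite /Rdiv Rmult_assoc Rmult_assoc Rinv_l ?Rmult_1_r; lra.
Qed.

Theorem lemma12 :
  exists b0 : nat, forall b k n : nat, (b0 <= b)%N -> (0 < k)%N ->
    (2 <= INR b / (INR k * ln (INR b)))%R ->
    forall v : vtx b n,
      (INR #|[set sigma : coloring b n k | proper_col sigma && ~~ frozen sigma v]|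
         / INR #|[set sigma : coloring b n k | proper_col sigma]| <= / INR b)%R.
Proof.
exists 9 => b k n Hb Hk Hh v.
apply: INR_div_le_inv; first exact: leq_trans Hb.
exact/card_unfrozen_proper/ratio_condition_of_density.
Qed.
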